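(* Fix $p\geq 3$ and put $\lambda=\lambda_p=2\cos(\pi/p)$. Then every admissible $\lambda$-continued fraction converges; that is, for every real $\alpha$ with admissible $\lambda$-continued fraction $[r_0;r_1,\dots]$, the limit $\lim_{n\to\infty}[r_0;r_1,\dots,r_n]$ exists.
   Context: For integers $r_0,\dots,r_n$, the finite $\lambda$-continued fraction is $[r_0;r_1,\dots,r_n]= r_0\lambda-\cfrac{1}{r_1\lambda-\cfrac{1}{\ddots-\cfrac{1}{r_n\lambda}}}$, and an infinite one $[r_0;r_1,\dots]$ is $\lim_{n\to\infty}[r_0;r_1,\dots,r_n]$ if the limit exists. Every finite real $\alpha$ is expanded by the ''next integral multiple of $\lambda$'' algorithm: $\alpha_0=\alpha$, and for $j\ge 0$, $r_j=\lfloor \alpha_j/\lambda\rfloor+1$ and $\alpha_{j+1}=\frac{1}{r_j\lambda-\alpha_j}$. The resulting sequence $[r_0;r_1,\dots]$ is the $\lambda$-continued fraction of $\alpha$; a $\lambda$-continued fraction is called admissible if it arises from some finite real number by this algorithm. *)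

From Stdlib Require Import Reals ZArith.
Open Scope R_scope.

Definition lam (p : nat) : R := 2 * cos (PI / INR p).

Definition floorR (x : R) : Z := Int_part x.

Definition digit (l x : R) : Z := (floorR (x / l) + 1)%Z.

Fixpoint alpha_seq (l a : R) (j : nat) : R :=
  match j with
  | O => a
  | S j' => let x := alpha_seq l a j' in / (IZR (digit l x) * l - x)
  end.

Definition lcf_digits (l a : R) (j : nat) : Z := digit l (alpha_seq l a j).

(* cf_tail l r k m = [r_k; r_{k+1}, ..., r_{k+m}]
   = r_k l - 1/(r_{k+1} l - 1/( ... - 1/(r_{k+m} l))) *)
Fixpoint cf_tail (l : R) (r : nat -> Z) (k m : nat) : R :=
  match m with
  | O => IZR (r k) * l
  | S m' => IZR (r k) * l - / cf_tail l r (S k) m'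
  end.

Definition lcf_finite (l : R) (r : nat -> Z) (n : nat) : R := cf_tail l r 0 n.

From Stdlib Require Import Reals ZArith Lra.
Open Scope R_scope.

(* The digit r_j is chosen so that alpha_j < r_j lambda; hence every alpha_{j+1}
   is positive and alpha_j = r_j lambda - 1/alpha_{j+1}.  As x |-> r lambda - 1/x
   is increasing on the positive reals, induction on the number of digits shows
   that the convergents of alpha stay strictly above alpha and strictly decrease,
   so they converge by monotone convergence. *)

Definition lcf_convergent (l a : R) (n : nat) : R := lcf_finite l (lcf_digits l a) n.

Lemma digit_spec (l x : R) : 0 < l -> x < IZR (digit l x) * l.
Proof.
  intro Hl. unfold digit, floorR. rewrite plus_IZR.
  destruct (base_Int_part (x / l)) as [_ Hfloor].
  assert (Hx : x / l < IZR (Int_part (x / l)) + 1) by lra.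
  apply Rmult_lt_compat_r with (r := l) in Hx; [|exact Hl].
  unfold Rdiv in Hx. rewrite Rmult_assoc, Rinv_l in Hx; lra.
Qed.

Lemma alpha_seq_1_pos (l a : R) : 0 < l -> 0 < alpha_seq l a 1.
Proof.
  intro Hl. pose proof (digit_spec l a Hl).
  simpl. apply Rinv_0_lt_compat. lra.
Qed.

Lemma alpha_seq_1_expand (l a : R) : a = IZR (digit l a) * l - / alpha_seq l a 1.
Proof. simpl. rewrite Rinv_inv. ring. Qed.

Lemma alpha_seq_S (l a : R) (j : nat) :
  alpha_seq l a (S j) = alpha_seq l (alpha_seq l a 1) j.
Proof.
  induction j as [|j IH]; [reflexivity|].
  change (alpha_seq l a (S (S j)))
    with (/ (IZR (digit l (alpha_seq l a (S j))) * l - alpha_seq l a (S j))).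
  rewrite IH. reflexivity.
Qed.

Lemma lcf_digits_S (l a : R) (j : nat) :
  lcf_digits l a (S j) = lcf_digits l (alpha_seq l a 1) j.
Proof. unfold lcf_digits. rewrite alpha_seq_S. reflexivity. Qed.

Lemma cf_tail_ext (l : R) (r r' : nat -> Z) :
  (forall j, r j = r' j) -> forall m k, cf_tail l r k m = cf_tail l r' k m.
Proof.
  intros E m. induction m as [|m IH]; intro k; simpl; rewrite E; [reflexivity|].
  rewrite IH. reflexivity.
Qed.

Lemma cf_tail_S (l : R) (r : nat -> Z) (m : nat) :
  forall k, cf_tail l r (S k) m = cf_tail l (fun j => r (S j)) k m.
Proof.
  induction m as [|m IH]; intro k; simpl; [reflexivity|].
  rewrite IH. reflexivity.
Qed.

Lemma lcf_convergent_0 (l a : R) : lcf_convergent l a 0 = IZR (digit l a) * l.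
Proof. reflexivity. Qed.

Lemma lcf_convergent_S (l a : R) (n : nat) :
  lcf_convergent l a (S n) =
  IZR (digit l a) * l - / lcf_convergent l (alpha_seq l a 1) n.
Proof.
  unfold lcf_convergent, lcf_finite. simpl cf_tail at 1. rewrite cf_tail_S.
  f_equal. f_equal. apply cf_tail_ext. intro j. apply lcf_digits_S.
Qed.

Lemma Rminus_Rinv_lt_compat (c x y : R) : 0 < x -> x < y -> c - / x < c - / y.
Proof.
  intros Hx Hxy.
  assert (/ y < / x) by (apply Rinv_lt_contravar; [apply Rmult_lt_0_compat|]; lra).
  lra.
Qed.

Lemma lcf_convergent_gt (l : R) (n : nat) :
  0 < l -> forall a, a < lcf_convergent l a n.
Proof.
  intro Hl. induction n as [|n IH]; intro a.
  - apply digit_spec, Hl.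
  - rewrite lcf_convergent_S, (alpha_seq_1_expand l a) at 1.
    apply Rminus_Rinv_lt_compat; [apply alpha_seq_1_pos, Hl | apply IH].
Qed.

Lemma lcf_convergent_decreasing (l : R) (n : nat) :
  0 < l -> forall a, lcf_convergent l a (S n) < lcf_convergent l a n.
Proof.
  intro Hl. induction n as [|n IH]; intro a.
  - rewrite lcf_convergent_S, (lcf_convergent_0 l a).
    pose proof (lcf_convergent_gt l 0 Hl (alpha_seq l a 1)).
    pose proof (alpha_seq_1_pos l a Hl).
    assert (0 < / lcf_convergent l (alpha_seq l a 1) 0)
      by (apply Rinv_0_lt_compat; lra).
    lra.
  - rewrite (lcf_convergent_S l a (S n)), (lcf_convergent_S l a n).
    apply Rminus_Rinv_lt_compat; [|apply IH].
    pose proof (lcf_convergent_gt l (S n) Hl (alpha_seq l a 1)).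
    pose proof (alpha_seq_1_pos l a Hl). lra.
Qed.

Lemma lcf_convergent_cv (l a : R) : 0 < l -> exists L, Un_cv (lcf_convergent l a) L.
Proof.
  intro Hl.
  destruct (decreasing_cv (lcf_convergent l a)) as [L HL].
  - intro n. left. apply lcf_convergent_decreasing, Hl.
  - exists (- a). intros x [n ->]. unfold opp_seq.
    pose proof (lcf_convergent_gt l n Hl a). lra.
  - exists L. exact HL.
Qed.

Lemma lam_pos (p : nat) : (3 <= p)%nat -> 0 < lam p.
Proof.
  intro Hp. unfold lam. apply Rmult_lt_0_compat; [lra|].
  assert (H3 : INR 3 <= INR p) by (apply le_INR, Hp). simpl in H3.
  pose proof PI_RGT_0.
  apply cos_gt_0.
  - assert (0 < PI / INR p) by (apply Rdiv_lt_0_compat; lra). lra.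
  - apply Rmult_lt_compat_l; [assumption|]. apply Rinv_lt_contravar; lra.
Qed.

Theorem lemma2p1 (p : nat) (Hp : (3 <= p)%nat) (alpha : R) :
  exists L : R,
    Un_cv (fun n => lcf_finite (lam p) (lcf_digits (lam p) alpha) n) L.
Proof. exact (lcf_convergent_cv (lam p) alpha (lam_pos p Hp)). Qed.
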